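(* Given an $L_1$-periodic tiling $T$ of type $(\gamma_1,\gamma_2,\gamma_3)$ with $\gamma_1,\gamma_2,\gamma_3>0$ and a source $z\neq0$ in $T$, let $T'=\mu_z(T)$ be the flipped tiling. Then \[ h_{T'}(x)=\begin{cases}h_T(x),&x\notin z+L_1,\\ h_T(x)+3,&\text{else}.\end{cases} \] Similarly, for a sink $z\neq0$ in $T$ and $T'=\mu_z(T)$, \[ h_{T'}(x)=\begin{cases}h_T(x),&x\notin z+L_1,\\ h_T(x)-3,&\text{else}.\end{cases} \]
   Context: Let $u^\top=(1,0)$, $v^\top=-(\tfrac12,\tfrac{\sqrt3}{2})$, $w=-(u+v)$, $L_0=\langle u,v\rangle$, and $L_1\le L_0$ a full-rank sublattice. An $L_1$-periodic tiling is an $L_1$-invariant map $T\colon L_0\to\{U,V,W\}$ such that for every $x$ exactly one of $T(x)=W$, $T(x+u)=V$, $T(x-v)=U$ holds; $T(x)$ removes one arrow of the upward triangle $x\to x+u\to x-v\to x$ ($U$: $x\to x+u$; $V$: $x-v\to x$; $W$: $x+u\to x-v$), and an arrow $x\to x+\alpha$ ($\alpha\in\{u,v,w\}$) is in $T$ if not removed. The type of $T$ counts the values $U,V,W$ over $L_0/L_1$. The height function $h_T$ satisfies $h_T(0)=0$ and $h_T(x+\alpha)=h_T(x)+1$ if $x\to x+\alpha$ is in $T$, else $h_T(x)-2$. A source (resp. sink) is a point where no arrow in $T$ ends (resp. starts). The flip $\mu_z(T)$ at a source $z$ is the tiling whose set of removed arrows is obtained from that of $T$ by deleting all arrows ending in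 $z+L_1$ and adding all arrows starting in $z+L_1$ (so $z$ becomes a sink); dually for a sink (delete removed arrows starting in $z+L_1$, add all arrows ending in $z+L_1$). Geometrically, the three lozenges meeting at each point of $z+L_1$ are replaced by the opposite configuration. *)

(* Points of L_0 = <u,v> are encoded by integer coordinates:
   (a,b) : Z*Z stands for a*u + b*v.  Thus u = (1,0), v = (0,1),
   w = -(u+v) = (-1,-1). *)
From Stdlib Require Import ZArith.
Open Scope Z_scope.

Definition point := (Z * Z)%type.

Definition padd (x y : point) : point := (fst x + fst y, snd x + snd y).
Definition psub (x y : point) : point := (fst x - fst y, snd x - snd y).
Definition pscale (m : Z) (x : point) : point := (m * fst x, m * snd x).
Definition p0 : point := (0, 0).

Definition vu : point := (1, 0).
Definition vv : point := (0, 1).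
Definition vw : point := (-1, -1).

Inductive dir := Du | Dv | Dw.
Definition vec (d : dir) : point :=
  match d with Du => vu | Dv => vv | Dw => vw end.

Inductive tile := TU | TV | TW.

(* A full-rank sublattice L_1 of L_0 ~ Z^2, given by a basis (p, q). *)
Definition det (p q : point) : Z := fst p * snd q - snd p * fst q.
Definition inL1 (p q : point) (x : point) : Prop :=
  exists m n : Z, x = padd (pscale m p) (pscale n q).
Definition in_coset (p q : point) (z x : point) : Prop := inL1 p q (psub x z).

Definition exactly_one3 (A B C : Prop) : Prop :=
  (A /\ ~ B /\ ~ C) \/ (~ A /\ B /\ ~ C) \/ (~ A /\ ~ B /\ C).

Definition is_tiling (p q : point) (T : point -> tile) : Prop :=
  (forall x l, inL1 p q l -> T (padd x l) = T x) /\
  (forall x, exactly_one3 (T x = TW) (T (padd x vu) = TV) (T (psub x vv) = TU)).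

(* Arrow x -> x+u is the U-arrow of the triangle at x;
   arrow x -> x+v is the V-arrow (y-v -> y) of the triangle at y = x+v;
   arrow x -> x+w is the W-arrow (y+u -> y-v) of the triangle at y = x-u. *)
Definition removed (T : point -> tile) (x : point) (d : dir) : Prop :=
  match d with
  | Du => T x = TU
  | Dv => T (padd x vv) = TV
  | Dw => T (psub x vu) = TW
  end.

Definition is_height (T : point -> tile) (h : point -> Z) : Prop :=
  h p0 = 0 /\
  forall x d,
    (~ removed T x d -> h (padd x (vec d)) = h x + 1) /\
    (removed T x d -> h (padd x (vec d)) = h x - 2).

Definition is_source (T : point -> tile) (z : point) : Prop :=
  forall x d, padd x (vec d) = z -> removed T x d.
Definition is_sink (T : point -> tile) (z : point) : Prop :=
  forall d, removed T z d.

Definition flip_source_removed (p q : point) (T : point -> tile) (z x : point)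
  (d : dir) : Prop :=
  (removed T x d /\ ~ in_coset p q z (padd x (vec d))) \/ in_coset p q z x.
Definition flip_sink_removed (p q : point) (T : point -> tile) (z x : point)
  (d : dir) : Prop :=
  (removed T x d /\ ~ in_coset p q z x) \/ in_coset p q z (padd x (vec d)).

(* Give every arrow the weight 1 if it belongs to the tiling and -2 if it is removed, so that a
   height function adds the weight along each arrow.  Flipping at a source z toggles exactly the
   arrows with one endpoint in z + L_1: those leaving the coset were present and become removed,
   those entering it were removed and become present.  Hence the weight of an arrow x -> y
   changes by 3 (chi y - chi x), where chi is the indicator of z + L_1, so h' - h - 3 chi is
   invariant along arrows; it vanishes at 0, which is not in z + L_1, and the lattice is connected.
   Sinks are symmetric, with the opposite sign. *)
From Stdlib Require Import ZArith Lia Classical ClassicalEpsilon.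
Open Scope Z_scope.

Ltac point_eq :=
  unfold padd, psub, pscale, vec, vu, vv, vw, p0; apply injective_projections; simpl; lia.

Definition indicator (P : Prop) : Z :=
  if excluded_middle_informative P then 1 else 0.

Lemma indicator_true (P : Prop) : P -> indicator P = 1.
Proof. intros H. unfold indicator. destruct excluded_middle_informative; tauto. Qed.

Lemma indicator_false (P : Prop) : ~ P -> indicator P = 0.
Proof. intros H. unfold indicator. destruct excluded_middle_informative; tauto. Qed.

Ltac eval_indicators :=
  repeat match goal with
  | |- context [indicator ?P] =>
      let H := fresh in
      destruct (classic P) as [H | H];
      [rewrite (indicator_true P H) | rewrite (indicator_false P H)]
  end.

Lemma indicator_iff (P Q : Prop) : (P <-> Q) -> indicator P = indicator Q.
Proof.
  intros HPQ. destruct (classic P).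
  - rewrite !indicator_true; tauto.
  - rewrite !indicator_false; tauto.
Qed.

Lemma Z_succ_invariant_const (g : Z -> Z) :
  (forall a, g (a + 1) = g a) -> forall a, g a = g 0.
Proof.
  intros Hg. apply Z.peano_ind; [reflexivity | |].
  - intros a IH. unfold Z.succ. rewrite Hg. exact IH.
  - intros a IH. rewrite <- IH, <- (Hg (Z.pred a)). f_equal. lia.
Qed.

Lemma uv_invariant_const (f : point -> Z) :
  (forall x, f (padd x vu) = f x) -> (forall x, f (padd x vv) = f x) ->
  forall x, f x = f p0.
Proof.
  intros Hu Hv [a b].
  rewrite (Z_succ_invariant_const (fun a => f (a, b))).
  - apply (Z_succ_invariant_const (fun b => f (0, b))). intro c.
    rewrite <- (Hv (0, c)). f_equal; point_eq.
  - intro c. rewrite <- (Hu (c, b)). f_equal; point_eq.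
Qed.

Lemma height_step (T : point -> tile) (h : point -> Z) (x : point) (d : dir) :
  is_height T h -> h (padd x (vec d)) = h x + 1 - 3 * indicator (removed T x d).
Proof.
  intros [_ Hh]. destruct (Hh x d) as [Hin Hout]. destruct (classic (removed T x d)).
  - rewrite indicator_true by assumption. rewrite Hout by assumption. lia.
  - rewrite indicator_false by assumption. rewrite Hin by assumption. lia.
Qed.

Lemma height_shift (T T' : point -> tile) (h h' c : point -> Z) (s : Z) :
  c p0 = 0 -> is_height T h -> is_height T' h' ->
  (forall x d, indicator (removed T' x d) =
               indicator (removed T x d) + s * (c x - c (padd x (vec d)))) ->
  forall x, h' x = h x + 3 * s * c x.
Proof.
  intros Hc0 Hh Hh' Hflip x.
  set (f y := h' y - h y - 3 * s * c y).
  assert (Hf : forall y d, f (padd y (vec d)) = f y).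
  { intros y d. unfold f.
    rewrite (height_step T h y d Hh), (height_step T' h' y d Hh'), Hflip. ring. }
  pose proof (uv_invariant_const f (fun y => Hf y Du) (fun y => Hf y Dv) x) as Hx.
  unfold f in Hx. rewrite Hc0, (proj1 Hh), (proj1 Hh') in Hx. lia.
Qed.

Lemma not_in_coset_origin (p q z : point) : ~ inL1 p q z -> ~ in_coset p q z p0.
Proof.
  intros Hz [m [n E]]. apply Hz. exists (-m), (-n).
  destruct z, p, q. unfold psub, padd, pscale, p0 in *. simpl in *.
  injection E as E1 E2. f_equal; lia.
Qed.

Section Flips.

Variables (p q : point) (T : point -> tile).
Hypothesis periodic : is_tiling p q T.

Lemma removed_periodic (x l : point) (d : dir) :
  inL1 p q l -> (removed T (padd x l) d <-> removed T x d).
Proof.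
  destruct periodic as [Hper _]. intros Hl. destruct d; simpl.
  - rewrite Hper by assumption. tauto.
  - replace (padd (padd x l) vv) with (padd (padd x vv) l) by point_eq.
    rewrite Hper by assumption. tauto.
  - replace (psub (padd x l) vu) with (padd (psub x vu) l) by point_eq.
    rewrite Hper by assumption. tauto.
Qed.

Lemma removed_from_coset (z x : point) (d : dir) :
  in_coset p q z x -> (removed T x d <-> removed T z d).
Proof.
  intros Hx. replace x with (padd z (psub x z)) by point_eq.
  apply removed_periodic. exact Hx.
Qed.

Lemma removed_into_coset (z x : point) (d : dir) :
  in_coset p q z (padd x (vec d)) -> (removed T x d <-> removed T (psub z (vec d)) d).
Proof.
  intros Hy.
  replace x with (padd (psub z (vec d)) (psub (padd x (vec d)) z)) by (destruct d; point_eq).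
  apply removed_periodic. exact Hy.
Qed.

Variable z : point.

Lemma source_in_removed (d : dir) : is_source T z -> removed T (psub z (vec d)) d.
Proof. intros Hs. apply Hs. destruct d; point_eq. Qed.

(* An arrow out of z and an arrow into z lie in a common upward triangle, whose single tile
   value cannot remove both. *)
Lemma source_out_present (d : dir) : is_source T z -> ~ removed T z d.
Proof.
  intros Hs E. destruct d; simpl in E.
  - pose proof (source_in_removed Dv Hs) as R. simpl in R.
    replace (padd (psub z vv) vv) with z in R by point_eq. congruence.
  - pose proof (Hs (padd z (1, 1)) Dw ltac:(point_eq)) as R. simpl in R.
    replace (psub (padd z (1, 1)) vu) with (padd z vv) in R by point_eq. congruence.
  - pose proof (source_in_removed Du Hs) as R. simpl in R. congruence.
Qed.

Lemma sink_in_present (d : dir) : is_sink T z -> ~ removed T (psub z (vec d)) d.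
Proof.
  intros Hs E. pose proof (Hs Du) as A. pose proof (Hs Dv) as B. pose proof (Hs Dw) as C.
  simpl in *. destruct d; simpl in E.
  - congruence.
  - replace (padd (psub z vv) vv) with z in E by point_eq. congruence.
  - replace (psub (psub z vw) vu) with (padd z vv) in E by point_eq. congruence.
Qed.

Let chi (x : point) : Z := indicator (in_coset p q z x).

Lemma flip_source_indicator (x : point) (d : dir) : is_source T z ->
  indicator (flip_source_removed p q T z x d) =
  indicator (removed T x d) + (chi x - chi (padd x (vec d))).
Proof.
  intros Hs. unfold chi, flip_source_removed.
  pose proof (removed_from_coset z x d). pose proof (removed_into_coset z x d).
  pose proof (source_out_present d Hs). pose proof (source_in_removed d Hs).
  eval_indicators; first [lia | tauto].
Qed.

Lemma flip_sink_indicator (x : point) (d : dir) : is_sink T z ->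
  indicator (flip_sink_removed p q T z x d) =
  indicator (removed T x d) - (chi x - chi (padd x (vec d))).
Proof.
  intros Hs. unfold chi, flip_sink_removed.
  pose proof (removed_from_coset z x d). pose proof (removed_into_coset z x d).
  pose proof (Hs d). pose proof (sink_in_present d Hs).
  eval_indicators; first [lia | tauto].
Qed.

Lemma flip_source_height (T' : point -> tile) (h h' : point -> Z) :
  is_source T z -> ~ inL1 p q z ->
  (forall x d, removed T' x d <-> flip_source_removed p q T z x d) ->
  is_height T h -> is_height T' h' ->
  forall x, h' x = h x + 3 * chi x.
Proof.
  intros Hs Hz HT' Hh Hh' x.
  rewrite (height_shift T T' h h' chi 1); [ring | | exact Hh | exact Hh' | ].
  - exact (indicator_false _ (not_in_coset_origin p q z Hz)).
  - intros y d. rewrite (indicator_iff _ _ (HT' y d)), flip_source_indicator by exact Hs.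
    ring.
Qed.

Lemma flip_sink_height (T' : point -> tile) (h h' : point -> Z) :
  is_sink T z -> ~ inL1 p q z ->
  (forall x d, removed T' x d <-> flip_sink_removed p q T z x d) ->
  is_height T h -> is_height T' h' ->
  forall x, h' x = h x - 3 * chi x.
Proof.
  intros Hs Hz HT' Hh Hh' x.
  rewrite (height_shift T T' h h' chi (-1)); [ring | | exact Hh | exact Hh' | ].
  - exact (indicator_false _ (not_in_coset_origin p q z Hz)).
  - intros y d. rewrite (indicator_iff _ _ (HT' y d)), flip_sink_indicator by exact Hs.
    ring.
Qed.

End Flips.

Theorem lemma6p39 (p q : point) (T : point -> tile) :
  det p q <> 0 ->
  is_tiling p q T ->
  (exists x, T x = TU) -> (exists x, T x = TV) -> (exists x, T x = TW) ->
  (forall (z : point) (T' : point -> tile) (h h' : point -> Z),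
      is_source T z -> ~ inL1 p q z ->
      (forall x d, removed T' x d <-> flip_source_removed p q T z x d) ->
      is_height T h -> is_height T' h' ->
      forall x, (~ in_coset p q z x -> h' x = h x) /\
                (in_coset p q z x -> h' x = h x + 3)) /\
  (forall (z : point) (T' : point -> tile) (h h' : point -> Z),
      is_sink T z -> ~ inL1 p q z ->
      (forall x d, removed T' x d <-> flip_sink_removed p q T z x d) ->
      is_height T h -> is_height T' h' ->
      forall x, (~ in_coset p q z x -> h' x = h x) /\
                (in_coset p q z x -> h' x = h x - 3)).
Proof.
  intros _ HT _ _ _. split.
  - intros z T' h h' Hs Hz HT' Hh Hh' x.
    rewrite (flip_source_height p q T HT z T' h h' Hs Hz HT' Hh Hh' x).
    split; intro C; eval_indicators; first [lia | tauto].
  - intros z T' h h' Hs Hz HT' Hh Hh' x.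
    rewrite (flip_sink_height p q T HT z T' h h' Hs Hz HT' Hh Hh' x).
    split; intro C; eval_indicators; first [lia | tauto].
Qed.
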